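(* Let $P_S,H_{SR},H_{SD},H_{RD},\sigma_R^2,\sigma_D^2>0$ and $\eta\in(0,1]$. Set $C_{SR}=\log(1+P_SH_{SR}/\sigma_R^2)$, $m=P_SH_{SD}/\sigma_D^2$, $C_{SD}=b=\log(1+m)$, $a=C_{SR}-C_{SD}$, $c=\eta H_{SR}H_{RD}P_S/\sigma_D^2$, and assume $a>0$. Let $$f_2(\lambda)=\lambda b+(1-\lambda)\log\Big(1+m+\frac{c\lambda}{1-\lambda}\Big),\quad\lambda\in(0,1),$$ and consider $\max_{\lambda\in(0,1)}\min\{\lambda C_{SR},f_2(\lambda)\}$. Then: (i) the equation $\lambda C_{SR}=f_2(\lambda)$ has exactly one solution $\lambda_1\in(0,1)$, namely $$\lambda_1=\frac{-\frac1a\mathcal W_{-1}\!\big(-\frac{a}{c}e^{-\frac{a(1+m)}{c}}\big)-\frac{1+m}{c}}{1-\frac1a\mathcal W_{-1}\!\big(-\frac{a}{c}e^{-\frac{a(1+m)}{c}}\big)-\frac{1+m}{c}};$$ (ii) $f_2$ has exactly one stationary point $\lambda_2\in(0,1)$, namely $$\lambda_2=\frac{e^{\mathcal W_0\left(\frac{c-(1+m)}{e^{1+b}}\right)+b+1}-(1+m)}{e^{\mathcal W_0\left(\frac{c-(1+m)}{e^{1+b}}\right)+b+1}+c-(1+m)};$$ (iii) $\lambda^*=\max\{\lambda_1,\lambda_2\}$ attains the maximum of $\min\{\lambda C_{SR},f_2(\lambda)\}$ over $\lambda\in(0,1)$.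
   Context: $\log$ is the natural logarithm. $\mathcal W_0$ and $\mathcal W_{-1}$ denote the principal and the lower real branches of the Lambert W function (real solutions $w$ of $we^w=x$ with $w\ge-1$, resp. $w\le-1$). This is the optimal time-fraction problem for the ''ideal'' energy-harvesting relay protocol with energy accumulation (maximal ratio combining) at the destination, where the relay forwarding power is $\eta H_{SR}P_S\lambda/(1-\lambda)$. *)

From Stdlib Require Import Reals ClassicalEpsilon.
Open Scope R_scope.

(* Chosen by Hilbert's epsilon; on the domain of the
   branch the solution is unique, so this is exactly the paper's function.
   Outside the domain the value is an unspecified real. *)
Definition LambertW0 (x : R) : R :=
  epsilon (inhabits 0) (fun w => -1 <= w /\ w * exp w = x).

Definition LambertWm1 (x : R) : R :=
  epsilon (inhabits 0) (fun w => w <= -1 /\ w * exp w = x).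

Definition f2 (b m c lam : R) : R :=
  lam * b + (1 - lam) * ln (1 + m + c * lam / (1 - lam)).

From Stdlib Require Import Reals Lra ClassicalEpsilon.
From Coquelicot Require Import Coquelicot.
Open Scope R_scope.

(* Substituting t = l / (1 - l) gives
     f2 l - l C_SR = (1 - l) (ln (1 + m + c t) - a t),
   so the crossing l1 corresponds to the positive root t1 of e^{a t} = 1 + m + c t,
   which is unique because e^{a t} is convex and lies below the line at t = 0.
   With w = -(a/c) e^{a t1} = -a(1+m)/c - a t1 one gets
   w e^w = -(a/c) e^{-a(1+m)/c}, and w <= -1 since the line crosses e^{a t} from
   above, so w = W_{-1}(...).  Writing X = 1 + m + c l / (1 - l), f2 is concave
   with derivative b - ln X + 1 + (c - 1 - m)/X, strictly decreasing in X; its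
   zero X = e^{V + b + 1} satisfies V e^V = (c - 1 - m)/e^{1+b} with V > -1,
   so V = W_0(...).  Finally min (l C_SR) (f2 l) is maximal at l1 when f2 is
   already decreasing there, and at the peak l2 of f2 otherwise. *)

Lemma ln_le_sub1 y : 0 < y -> ln y <= y - 1.
Proof.
  intros Hy. pose proof (exp_ineq1_le (ln y)) as H. rewrite exp_ln in H; lra.
Qed.

Lemma exp_convex x y s : 0 <= s <= 1 ->
  exp ((1 - s) * x + s * y) <= (1 - s) * exp x + s * exp y.
Proof.
  intros Hs. set (z := (1 - s) * x + s * y).
  assert (Htan : forall u, exp z * (1 + (u - z)) <= exp u).
  { intros u. replace (exp u) with (exp z * exp (u - z))
      by (rewrite <- exp_plus; f_equal; ring).
    apply Rmult_le_compat_l; [apply Rlt_le, exp_pos | apply exp_ineq1_le]. }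
  pose proof (Htan x) as Hx. pose proof (Htan y) as Hy.
  assert (Hcomb : (1 - s) * (exp z * (1 + (x - z))) + s * (exp z * (1 + (y - z))) = exp z)
    by (unfold z; ring).
  assert ((1 - s) * (exp z * (1 + (x - z))) <= (1 - s) * exp x)
    by (apply Rmult_le_compat_l; lra).
  assert (s * (exp z * (1 + (y - z))) <= s * exp y) by (apply Rmult_le_compat_l; lra).
  lra.
Qed.

Section ExpAffineRoot.

Variables a p q t1 : R.
Hypotheses (p_gt1 : 1 < p) (t1_gt0 : 0 < t1) (root : exp (a * t1) = p + q * t1).

Lemma exp_lt_affine_before_root t : 0 <= t < t1 -> exp (a * t) < p + q * t.
Proof.
  intros Ht. set (s := t / t1).
  assert (Hst : s * t1 = t) by (unfold s; field; lra).
  assert (Hs : 0 <= s < 1).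
  { split; [unfold s; apply Rmult_le_pos; [lra | apply Rlt_le, Rinv_0_lt_compat; lra]|nra]. }
  pose proof (exp_convex 0 (a * t1) s ltac:(lra)) as Hconv.
  replace ((1 - s) * 0 + s * (a * t1)) with (a * t) in Hconv by (rewrite <- Hst; ring).
  rewrite exp_0, root in Hconv. nra.
Qed.

Lemma affine_lt_exp_after_root t : t1 < t -> p + q * t < exp (a * t).
Proof.
  intros Ht. set (s := t1 / t).
  assert (Hst : s * t = t1) by (unfold s; field; lra).
  assert (Hs : 0 < s < 1).
  { split; [unfold s; apply Rdiv_lt_0_compat; lra | nra]. }
  pose proof (exp_convex 0 (a * t) s ltac:(lra)) as Hconv.
  replace ((1 - s) * 0 + s * (a * t)) with (a * t1) in Hconv by (rewrite <- Hst; ring).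
  rewrite exp_0, root in Hconv.
  assert (s * (p + q * t) < s * exp (a * t)) by nra.
  apply Rmult_lt_reg_l with s; lra.
Qed.

Lemma slope_lt_exp_at_root : q < a * exp (a * t1).
Proof.
  pose proof (exp_ineq1_le (- (a * t1))) as Hle.
  assert (Hinv : exp (a * t1) * exp (- (a * t1)) = 1)
    by (rewrite <- exp_plus, Rplus_opp_r; apply exp_0).
  assert (exp (a * t1) * (1 + - (a * t1)) <= exp (a * t1) * exp (- (a * t1)))
    by (apply Rmult_le_compat_l; [apply Rlt_le, exp_pos | exact Hle]).
  assert (q * t1 < a * exp (a * t1) * t1) by nra.
  apply Rmult_lt_reg_r with t1; lra.
Qed.

End ExpAffineRoot.

Lemma exp_affine_root_exists a p q : 0 < a -> 1 < p -> 0 < q ->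
  exists t1, 0 < t1 /\ exp (a * t1) = p + q * t1.
Proof.
  intros Ha Hp Hq.
  set (g := fun t => exp (a * t) - (p + q * t)).
  assert (Hg : continuity g).
  { intros x. apply derivable_continuous_pt. eexists. apply is_derive_Reals.
    unfold g. auto_derive; [exact I | reflexivity]. }
  (* at T = 4K/a, e^{aT} >= (1 + 2K)^2 beats the line *)
  set (K := q / a + p). set (T := 4 * K / a).
  assert (HK : 0 < K) by (unfold K; assert (0 < q / a) by (apply Rdiv_lt_0_compat; lra); lra).
  assert (HaT : a * T = 4 * K) by (unfold T; field; lra).
  assert (HqT : q * T = 4 * K * (q / a)) by (unfold T; field; lra).
  assert (HT : 0 < T) by (unfold T; apply Rdiv_lt_0_compat; lra).
  assert (Hsq : exp (4 * K) = exp (2 * K) * exp (2 * K)) by (rewrite <- exp_plus; f_equal; ring).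
  pose proof (exp_ineq1_le (2 * K)).
  assert (Hg0 : g 0 < 0) by (unfold g; rewrite Rmult_0_r, exp_0; lra).
  assert (HgT : 0 < g T).
  { unfold g. rewrite HaT, HqT, Hsq.
    assert ((1 + 2 * K) * (1 + 2 * K) <= exp (2 * K) * exp (2 * K))
      by (apply Rmult_le_compat; lra).
    assert (0 < q / a) by (apply Rdiv_lt_0_compat; lra).
    assert (K * K = K * (q / a) + K * p) by (unfold K; ring).
    assert (0 < K * p) by (apply Rmult_lt_0_compat; lra).
    assert (p < K) by (unfold K; lra).
    nra. }
  destruct (IVT g 0 T Hg HT Hg0 HgT) as [t1 [Ht1 Hgt1]].
  exists t1. split.
  - destruct (Req_dec t1 0); [subst; lra | lra].
  - unfold g in Hgt1. lra.
Qed.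

Lemma wexp_decreasing w w' : w < w' -> w' <= -1 -> w' * exp w' < w * exp w.
Proof.
  intros Hww Hw'. set (d := w' - w).
  assert (Hd : 0 < d) by (unfold d; lra).
  assert (He : exp w' = exp w * exp d) by (rewrite <- exp_plus; f_equal; unfold d; ring).
  pose proof (exp_ineq1 d ltac:(lra)). pose proof (exp_pos w).
  assert (w' * exp d < w' * (1 + d)) by (apply Rmult_lt_gt_compat_neg_l; lra).
  assert (w' * (1 + d) <= w) by (unfold d in *; nra).
  rewrite He. nra.
Qed.

Lemma LambertWm1_wexp w : w <= -1 -> LambertWm1 (w * exp w) = w.
Proof.
  intros Hw. unfold LambertWm1.
  destruct (epsilon_spec (inhabits 0) (fun v => v <= -1 /\ v * exp v = w * exp w)
              (ex_intro _ w (conj Hw eq_refl))) as [Hv Hvw].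
  set (v := epsilon _ _) in *.
  destruct (Rtotal_order v w) as [H | [H | H]]; [| exact H |].
  - pose proof (wexp_decreasing v w H Hw). lra.
  - pose proof (wexp_decreasing w v H Hv). lra.
Qed.

Lemma LambertW0_spec x : - exp (-1) < x ->
  -1 < LambertW0 x /\ LambertW0 x * exp (LambertW0 x) = x.
Proof.
  intros Hx.
  assert (Hex : exists v, -1 <= v /\ v * exp v = x).
  { set (k := fun v => v * exp v - x).
    assert (Hk : continuity k).
    { intros y. apply derivable_continuous_pt. eexists. apply is_derive_Reals.
      unfold k. auto_derive; [exact I | reflexivity]. }
    set (U := Rabs x + 1).
    pose proof (Rle_abs x). pose proof (Rabs_pos x).
    assert (HU : -1 < U) by (unfold U; lra).
    assert (Hk1 : k (-1) < 0) by (unfold k; lra).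
    assert (HkU : 0 < k U).
    { pose proof (exp_ineq1_le U).
      assert (U * 1 <= U * exp U) by (apply Rmult_le_compat_l; unfold U in *; lra).
      unfold k, U in *. lra. }
    destruct (IVT k (-1) U Hk HU Hk1 HkU) as [v [Hv Hkv]].
    exists v. unfold k in Hkv. split; lra. }
  destruct (epsilon_spec (inhabits 0) _ Hex) as [Hv Hvx]. fold (LambertW0 x) in Hv, Hvx.
  split; [| exact Hvx].
  destruct (Req_dec (LambertW0 x) (-1)) as [Heq | Hne]; [| lra].
  rewrite Heq in Hvx. lra.
Qed.

Lemma Rmin_linear_unimodal_max (g : R -> R) (k l1 l2 : R) :
  0 <= k -> 0 < l1 -> l2 < 1 ->
  l1 * k = g l1 -> (forall l, l1 < l < 1 -> g l < l * k) ->
  (forall l, 0 < l < 1 -> g l <= g l2) ->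
  (forall l l', l2 <= l -> l <= l' -> l' < 1 -> g l' <= g l) ->
  forall l, 0 < l < 1 -> Rmin (l * k) (g l) <= Rmin (Rmax l1 l2 * k) (g (Rmax l1 l2)).
Proof.
  intros Hk Hl1 Hl2 Heq Hbelow Hmax Hdecr l Hl.
  pose proof (Rmin_l (l * k) (g l)) as Hmin_l. pose proof (Rmin_r (l * k) (g l)) as Hmin_r.
  unfold Rmax. destruct (Rle_dec l1 l2) as [Hcmp | Hcmp].
  - assert (Hg2 : g l2 <= l2 * k).
    { destruct (Req_dec l1 l2) as [<- | Hne]; [lra |].
      apply Rlt_le, Hbelow. lra. }
    rewrite (Rmin_right (l2 * k)) by exact Hg2.
    pose proof (Hmax l Hl). lra.
  - rewrite (Rmin_left (l1 * k)) by lra.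
    destruct (Rle_or_lt l l1) as [Hll1 | Hll1].
    + assert (l * k <= l1 * k) by (apply Rmult_le_compat_r; lra). lra.
    + pose proof (Hdecr l1 l ltac:(lra) (Rlt_le _ _ Hll1) (proj2 Hl)). lra.
Qed.

Definition f2_arg (m c l : R) : R := 1 + m + c * l / (1 - l).

(* the derivative of [f2] at [l], written as a function of [X = f2_arg m c l] *)
Definition f2_slope (b m c X : R) : R := b - ln X + 1 + (c - 1 - m) / X.

Section F2.

Variables b m c : R.
Hypotheses (m_gt0 : 0 < m) (c_gt0 : 0 < c).

Lemma f2_arg_gt l : 0 < l < 1 -> 1 + m < f2_arg m c l.
Proof.
  intros Hl. unfold f2_arg.
  assert (0 < c * l / (1 - l)) by (apply Rdiv_lt_0_compat; nra). lra.
Qed.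

Lemma f2_arg_increasing l l' : l < l' -> l' < 1 -> f2_arg m c l < f2_arg m c l'.
Proof.
  intros Hll' Hl'. unfold f2_arg.
  replace (c * l / (1 - l)) with (c * / (1 - l) - c) by (field; lra).
  replace (c * l' / (1 - l')) with (c * / (1 - l') - c) by (field; lra).
  assert (/ (1 - l) < / (1 - l')) by (apply Rinv_lt_contravar; nra).
  assert (c * / (1 - l) < c * / (1 - l')) by (apply Rmult_lt_compat_l; lra).
  lra.
Qed.

Lemma f2_arg_inv X : 1 + m < X ->
  0 < (X - (1 + m)) / (X + c - (1 + m)) < 1 /\
  f2_arg m c ((X - (1 + m)) / (X + c - (1 + m))) = X.
Proof.
  intros HX. split; [split|].
  - apply Rdiv_lt_0_compat; lra.
  - apply Rmult_lt_reg_r with (X + c - (1 + m)); [lra |].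
    unfold Rdiv. rewrite Rmult_assoc, Rinv_l; lra.
  - unfold f2_arg. field. split; lra.
Qed.

Lemma is_derive_f2 l : 0 < l < 1 ->
  derivable_pt_lim (f2 b m c) l (f2_slope b m c (f2_arg m c l)).
Proof.
  intros Hl. pose proof (f2_arg_gt l Hl) as HX. unfold f2_arg in HX.
  apply is_derive_Reals. unfold f2.
  auto_derive.
  - split; [intro; lra |]. split; [revert HX; unfold Rdiv, Rminus; lra | exact I].
  - unfold f2_slope, f2_arg. set (L := ln _). field. split; intro; nra.
Qed.

Lemma f2_slope_decreasing X X' : 1 + m < X -> X < X' ->
  f2_slope b m c X' < f2_slope b m c X.
Proof.
  intros HX HXX'. unfold f2_slope.
  pose proof (ln_le_sub1 (X / X') ltac:(apply Rdiv_lt_0_compat; lra)) as Hln.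
  rewrite ln_div in Hln by lra.
  assert (Hid : 1 - X / X' - (c - 1 - m) / X' + (c - 1 - m) / X
                = (X' - X) * (X + (c - 1 - m)) / (X * X')) by (field; lra).
  assert (0 < (X' - X) * (X + (c - 1 - m)) / (X * X')).
  { apply Rdiv_lt_0_compat; apply Rmult_lt_0_compat; lra. }
  lra.
Qed.

(* from [ln X <= ln X0 + X / X0 - 1] *)
Lemma f2_below_tangent l l0 : 0 < l < 1 -> 0 < l0 < 1 ->
  f2 b m c l <= f2 b m c l0 + f2_slope b m c (f2_arg m c l0) * (l - l0).
Proof.
  intros Hl Hl0.
  pose proof (f2_arg_gt l Hl). pose proof (f2_arg_gt l0 Hl0).
  set (X := f2_arg m c l) in *. set (X0 := f2_arg m c l0) in *.
  pose proof (ln_le_sub1 (X / X0) ltac:(apply Rdiv_lt_0_compat; lra)) as Hln.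
  rewrite ln_div in Hln by lra.
  assert (Hf2 : f2 b m c l <= l * b + (1 - l) * (ln X0 + X / X0 - 1)).
  { unfold f2. fold (f2_arg m c l). fold X.
    apply Rplus_le_compat_l, Rmult_le_compat_l; lra. }
  assert (l * b + (1 - l) * (ln X0 + X / X0 - 1)
          = f2 b m c l0 + f2_slope b m c X0 * (l - l0)).
  { unfold f2, f2_slope. fold (f2_arg m c l0). fold X0. set (L0 := ln X0).
    unfold X, X0, f2_arg. field. repeat split; intro; nra. }
  lra.
Qed.

Lemma f2_nonincreasing_after l0 l l' : 0 < l0 -> f2_slope b m c (f2_arg m c l0) <= 0 ->
  l0 <= l -> l <= l' -> l' < 1 -> f2 b m c l' <= f2 b m c l.
Proof.
  intros Hl0 Hslope Hl0l Hll' Hl'.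
  pose proof (f2_below_tangent l' l ltac:(lra) ltac:(lra)) as Htan.
  assert (f2_slope b m c (f2_arg m c l) <= 0).
  { destruct (Req_dec l0 l) as [<- | Hne]; [exact Hslope |].
    pose proof (f2_slope_decreasing _ _ (f2_arg_gt l0 ltac:(lra))
                  (f2_arg_increasing l0 l ltac:(lra) ltac:(lra))). lra. }
  assert (f2_slope b m c (f2_arg m c l) * (l' - l) <= 0) by (apply Rmult_le_0_r; lra).
  lra.
Qed.

Lemma f2_le_stationary X l : 1 + m < X -> f2_slope b m c X = 0 -> 0 < l < 1 ->
  f2 b m c l <= f2 b m c ((X - (1 + m)) / (X + c - (1 + m))).
Proof.
  intros HX Hslope Hl. destruct (f2_arg_inv X HX) as [Hlam Harg].
  pose proof (f2_below_tangent l _ Hl Hlam) as Htan.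
  rewrite Harg, Hslope in Htan. lra.
Qed.

Lemma f2_unique_stationary X : 1 + m < X -> f2_slope b m c X = 0 ->
  let lam := (X - (1 + m)) / (X + c - (1 + m)) in
  0 < lam < 1 /\ derivable_pt_lim (f2 b m c) lam 0 /\
  forall l, 0 < l < 1 -> derivable_pt_lim (f2 b m c) l 0 -> l = lam.
Proof.
  intros HX Hslope lam. destruct (f2_arg_inv X HX) as [Hlam Harg]. fold lam in Hlam, Harg.
  split; [exact Hlam | split].
  - rewrite <- Hslope, <- Harg. apply is_derive_f2, Hlam.
  - intros l Hl Hd.
    pose proof (uniqueness_limite _ _ _ _ Hd (is_derive_f2 l Hl)) as Hslope_l.
    pose proof (f2_arg_gt l Hl) as HXl.
    assert (HXE : f2_arg m c l = X).
    { destruct (Rtotal_order (f2_arg m c l) X) as [H | [H | H]]; [| exact H |].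
      - pose proof (f2_slope_decreasing _ _ HXl H). lra.
      - pose proof (f2_slope_decreasing _ _ HX H). lra. }
    rewrite <- Harg in HXE.
    destruct (Rtotal_order l lam) as [H | [H | H]]; [| exact H |].
    + pose proof (f2_arg_increasing l lam H (proj2 Hlam)). lra.
    + pose proof (f2_arg_increasing lam l H (proj2 Hl)). lra.
Qed.

End F2.

Lemma f2_stationary_value m c : 0 < m -> 0 < c ->
  let b := ln (1 + m) in
  let E := exp (LambertW0 ((c - (1 + m)) / exp (1 + b)) + b + 1) in
  1 + m < E /\ f2_slope b m c E = 0.
Proof.
  intros Hm Hc b E.
  set (z := (c - (1 + m)) / exp (1 + b)).
  assert (He1b : exp (1 + b) = exp 1 * (1 + m)) by (unfold b; rewrite exp_plus, exp_ln; lra).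
  assert (Hee : exp (-1) * exp 1 = 1)
    by (rewrite <- exp_plus; replace (-1 + 1) with 0 by ring; apply exp_0).
  pose proof (exp_pos 1) as Hexp1.
  assert (Hz : z * (exp 1 * (1 + m)) = c - (1 + m)) by (unfold z; rewrite He1b; field; lra).
  assert (Hzgt : - exp (-1) < z).
  { apply Rmult_lt_reg_r with (exp 1 * (1 + m)); [apply Rmult_lt_0_compat; lra |].
    rewrite Hz. replace (- exp (-1) * (exp 1 * (1 + m))) with (- (exp (-1) * exp 1) * (1 + m))
      by ring. rewrite Hee. lra. }
  destruct (LambertW0_spec z Hzgt) as [HV HVz]. fold z in E. set (V := LambertW0 z) in *.
  assert (HE : E = exp V * exp 1 * (1 + m)).
  { unfold E, b. rewrite exp_plus, exp_plus, exp_ln by lra. ring. }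
  assert (1 < exp V * exp 1).
  { rewrite <- exp_plus. pose proof (exp_increasing 0 (V + 1) ltac:(lra)) as Hinc.
    rewrite exp_0 in Hinc. exact Hinc. }
  split; [rewrite HE; nra |].
  assert (HVE : c - 1 - m = V * E).
  { transitivity (c - (1 + m)); [ring |]. rewrite <- Hz, <- HVz, HE. ring. }
  assert (HlnE : ln E = V + b + 1) by apply ln_exp.
  unfold f2_slope. rewrite HVE, HlnE. field. rewrite HE. apply Rgt_not_eq. nra.
Qed.

Section Crossing.

Variables a b m c t1 : R.
Hypotheses (m_gt0 : 0 < m) (c_gt0 : 0 < c) (t1_gt0 : 0 < t1)
  (root : exp (a * t1) = 1 + m + c * t1).

Lemma f2_sub_linear l : 0 < l < 1 ->
  f2 b m c l - l * (a + b)
  = (1 - l) * (ln (1 + m + c * (l / (1 - l))) - a * (l / (1 - l))).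
Proof.
  intros Hl. unfold f2.
  replace (c * l / (1 - l)) with (c * (l / (1 - l))) by (field; lra).
  set (L := ln _). field. lra.
Qed.

Lemma f2_crossing_sign l : 0 < l < 1 ->
  (l < t1 / (1 + t1) -> l * (a + b) < f2 b m c l) /\
  (t1 / (1 + t1) < l -> f2 b m c l < l * (a + b)).
Proof.
  intros Hl. pose proof (f2_sub_linear l Hl) as Hdiff.
  set (t := l / (1 - l)) in Hdiff.
  assert (Ht : t * (1 - l) = l) by (unfold t; field; lra).
  assert (Ht0 : 0 < t) by nra.
  assert (Hlam : t1 / (1 + t1) * (1 + t1) = t1) by (field; lra).
  set (lam := t1 / (1 + t1)) in *.
  assert (Hpos : 0 < 1 + m + c * t) by nra.
  split; intros Hcmp.
  - assert (t < t1) by nra.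
    pose proof (exp_lt_affine_before_root a (1 + m) c t1 ltac:(lra) t1_gt0 root t ltac:(lra)).
    assert (a * t < ln (1 + m + c * t)).
    { rewrite <- (ln_exp (a * t)). apply ln_increasing; [apply exp_pos | assumption]. }
    assert (0 < (1 - l) * (ln (1 + m + c * t) - a * t)) by (apply Rmult_lt_0_compat; lra).
    lra.
  - assert (t1 < t) by nra.
    pose proof (affine_lt_exp_after_root a (1 + m) c t1 ltac:(lra) t1_gt0 root t ltac:(lra)).
    assert (ln (1 + m + c * t) < a * t).
    { rewrite <- (ln_exp (a * t)). apply ln_increasing; assumption. }
    assert (0 < (1 - l) * (a * t - ln (1 + m + c * t))) by (apply Rmult_lt_0_compat; lra).
    lra.
Qed.

Lemma f2_unique_crossing : let lam := t1 / (1 + t1) in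
  0 < lam < 1 /\ lam * (a + b) = f2 b m c lam /\
  forall l, 0 < l < 1 -> l * (a + b) = f2 b m c l -> l = lam.
Proof.
  intros lam.
  assert (Hlam : 0 < lam < 1).
  { unfold lam. split; [apply Rdiv_lt_0_compat; lra |].
    apply Rmult_lt_reg_r with (1 + t1); [lra |].
    unfold Rdiv. rewrite Rmult_assoc, Rinv_l; lra. }
  split; [exact Hlam | split].
  - pose proof (f2_sub_linear lam Hlam) as Hdiff.
    replace (lam / (1 - lam)) with t1 in Hdiff by (unfold lam; field; lra).
    rewrite <- root, ln_exp in Hdiff. lra.
  - intros l Hl Heq. destruct (f2_crossing_sign l Hl) as [Hbefore Hafter].
    destruct (Rtotal_order l lam) as [H | [H | H]]; [| exact H |].
    + specialize (Hbefore H). lra.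
    + specialize (Hafter H). lra.
Qed.

Lemma LambertWm1_crossing : a <> 0 ->
  let W1 := LambertWm1 (- (a / c) * exp (- (a * (1 + m) / c))) in
  (- (1 / a) * W1 - (1 + m) / c) / (1 - (1 / a) * W1 - (1 + m) / c) = t1 / (1 + t1).
Proof.
  intros Ha W1.
  set (w := - (a / c) * exp (a * t1)).
  assert (Hw : w <= -1).
  { pose proof (slope_lt_exp_at_root a (1 + m) c t1 ltac:(lra) t1_gt0 root).
    assert (a / c * exp (a * t1) * c = a * exp (a * t1)) by (field; lra).
    assert (1 < a / c * exp (a * t1)) by nra.
    unfold w. lra. }
  (* by the root equation, [w = - a (1 + m) / c - a t1] *)
  assert (Hwexp : w * exp w = - (a / c) * exp (- (a * (1 + m) / c))).
  { replace (exp w) with (exp (- (a * (1 + m) / c)) * exp (- (a * t1)))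
      by (rewrite <- exp_plus; f_equal; unfold w; rewrite root; field; lra).
    unfold w. rewrite (exp_Ropp (a * t1)). field. split; [lra | apply Rgt_not_eq, exp_pos]. }
  assert (HW1 : W1 = w) by (unfold W1; rewrite <- Hwexp; apply LambertWm1_wexp, Hw).
  rewrite HW1. unfold w. rewrite root.
  field. split; [lra |]. split; [lra |]. split; [exact Ha |].
  replace (a * c - - a * (1 + m + c * t1) - (1 + m) * a) with (a * (c * (1 + t1))) by ring.
  repeat apply Rmult_integral_contrapositive_currified; lra.
Qed.

End Crossing.

Theorem theorem2 (PS HSR HSD HRD sR2 sD2 eta : R) :
  0 < PS -> 0 < HSR -> 0 < HSD -> 0 < HRD -> 0 < sR2 -> 0 < sD2 ->
  0 < eta <= 1 ->
  let CSR := ln (1 + PS * HSR / sR2) in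
  let m := PS * HSD / sD2 in
  let b := ln (1 + m) in
  let a := CSR - b in
  let c := eta * HSR * HRD * PS / sD2 in
  0 < a ->
  let W1 := LambertWm1 (- (a / c) * exp (- (a * (1 + m) / c))) in
  let lam1 := (- (1 / a) * W1 - (1 + m) / c) / (1 - (1 / a) * W1 - (1 + m) / c) in
  let E := exp (LambertW0 ((c - (1 + m)) / exp (1 + b)) + b + 1) in
  let lam2 := (E - (1 + m)) / (E + c - (1 + m)) in
  let lamstar := Rmax lam1 lam2 in
  (0 < lam1 < 1 /\ lam1 * CSR = f2 b m c lam1 /\
   forall l, 0 < l < 1 -> l * CSR = f2 b m c l -> l = lam1) /\
  (0 < lam2 < 1 /\ derivable_pt_lim (f2 b m c) lam2 0 /\
   forall l, 0 < l < 1 -> derivable_pt_lim (f2 b m c) l 0 -> l = lam2) /\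
  (0 < lamstar < 1 /\
   forall l, 0 < l < 1 ->
     Rmin (l * CSR) (f2 b m c l) <= Rmin (lamstar * CSR) (f2 b m c lamstar)).
Proof.
  intros HPS HSRp HSDp HRDp HsR HsD Heta CSR m b a c Ha W1 lam1 E lam2 lamstar.
  assert (Hm : 0 < m) by (apply Rdiv_lt_0_compat; [apply Rmult_lt_0_compat |]; lra).
  assert (Hc : 0 < c) by (apply Rdiv_lt_0_compat; [repeat apply Rmult_lt_0_compat |]; lra).
  assert (Hb : 0 < b) by (rewrite <- ln_1; apply ln_increasing; lra).
  replace CSR with (a + b) by (unfold a; ring).
  destruct (exp_affine_root_exists a (1 + m) c Ha ltac:(lra) Hc) as [t1 [Ht1 Hroot]].
  assert (Hlam1 : lam1 = t1 / (1 + t1))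
    by exact (LambertWm1_crossing a m c t1 Hm Hc Ht1 Hroot ltac:(lra)).
  destruct (f2_unique_crossing a b m c t1 Hm Hc Ht1 Hroot) as [Hl1 [Heq1 Huniq1]].
  rewrite <- Hlam1 in Hl1, Heq1, Huniq1.
  destruct (f2_stationary_value m c Hm Hc) as [HE Hslope]. fold b E in HE, Hslope.
  destruct (f2_unique_stationary b m c Hm Hc E HE Hslope) as [Hl2 [Hd2 Huniq2]].
  fold lam2 in Hl2, Hd2, Huniq2.
  split; [auto |]. split; [auto |].
  split; [unfold lamstar; apply Rmax_case; assumption |].
  apply Rmin_linear_unimodal_max; try lra.
  - intros l Hl. rewrite Hlam1 in Hl.
    apply (f2_crossing_sign a b m c t1 Hm Hc Ht1 Hroot l ltac:(lra)); lra.
  - intros l Hl. apply f2_le_stationary; assumption.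
  - intros l l' Hl2l Hll' Hl'.
    apply (f2_nonincreasing_after b m c Hm Hc lam2); try lra.
    destruct (f2_arg_inv m c Hc E HE) as [_ Harg]. fold lam2 in Harg.
    rewrite Harg, Hslope. lra.
Qed.
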